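(* Let $\mathbb K$ be an algebraically closed field, let $W\subset\mathbb A^n_{\mathbb K}$ be a smooth complete intersection of codimension $r$ with vanishing ideal $I_W=\langle f_1,\dots,f_r\rangle\subset\mathbb K[x_1,\dots,x_n]$, $d=n-r$, and let $h=\det(M)$, where $M$ is the $r\times r$ submatrix of the Jacobian matrix $(\partial f_i/\partial x_j)$ formed by the last $r$ columns (columns $d+1,\dots,n$). Let $f\in\mathbb K[x_1,\dots,x_n]$ have nonzero image in $\mathbb K[W]$. Let $\tilde f\in\mathbb K[x_1,\dots,x_n]$ be a polynomial whose image in $\mathcal O_W(W\cap D(h))$ coincides with that of $f$ and such that $\partial\tilde f/\partial x_i$ maps to zero in $\mathcal O_W(W\cap D(h))/\langle f\rangle$ for $i=d+1,\dots,n$; set $H_j=\partial\tilde f/\partial x_j$ for $j=1,\dots,d$, and let $\Delta(f)=\langle f,H_1,\dots,H_d\rangle\mathcal O_W(W\cap D(h))$. Then for every point $p\in W\cap D(h)$, $$\Delta(f)\,\widehat{\mathcal O_{W,p}}=\Delta_p(f).$$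
   Context: $D(h)=\{h\neq0\}$, and $\mathcal O_W(W\cap D(h))$ is the ring of regular functions on $W\cap D(h)$ (the localization of $\mathbb K[W]$ at powers of $h$). For $p=(a_1,\dots,a_n)\in W\cap D(h)$, the images $X_{p,j}$ of $x_j-a_j$, $j=1,\dots,d$, form a regular system of parameters of the regular local ring $\mathcal O_{W,p}$, and by the Cohen structure theorem $\Phi:\mathbb K[[y_1,\dots,y_d]]\to\widehat{\mathcal O_{W,p}}$, $y_j\mapsto X_{p,j}$, is an isomorphism onto the completion. For $g\in\widehat{\mathcal O_{W,p}}$ define $\partial g/\partial X_{p,j}=\Phi(\partial\Phi^{-1}(g)/\partial y_j)$ (formal partial derivative). Then $\Delta_p(f)=\langle f,\partial f/\partial X_{p,1},\dots,\partial f/\partial X_{p,d}\rangle\subset\widehat{\mathcal O_{W,p}}$. Elements of $\mathbb K[x_1,\dots,x_n]$ and of $\mathcal O_W(W\cap D(h))$ are mapped to $\widehat{\mathcal O_{W,p}}$ via the natural maps. *)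

From HB Require Import structures.
From mathcomp Require Import all_boot all_order all_algebra.
From mathcomp Require Import mpoly.
Set Implicit Arguments. Unset Strict Implicit. Unset Printing Implicit Defensive.
Import Order.TTheory GRing.Theory.
Local Open Scope ring_scope.

(* Formal power series K[[y_1,...,y_d]] : coefficient functions on    *)
(* monomials 'X_{1..d}.                                               *)
Definition pseries (K : fieldType) (d : nat) := 'X_{1..d} -> K.

Section PSeries.
Variables (K : fieldType) (d : nat).
Implicit Types (F G : pseries K d).

Definition ps1 : pseries K d := fun m => (m == 0%MM)%:R.
Definition psC (c : K) : pseries K d := fun m => if m == 0%MM then c else 0.
Definition psX (j : 'I_d) : pseries K d := fun m => (m == mnm1 j)%:R.
Definition psadd F G : pseries K d := fun m => F m + G m.
Definition psmul F G : pseries K d := fun m =>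
  \sum_(m1 : 'X_{1..d < (mdeg m).+1} | (bmnm m1 <= m)%MM)
     F (bmnm m1) * G (m - bmnm m1)%MM.
Definition psexp F (k : nat) : pseries K d := iter k (psmul F) ps1.
Definition psderiv (j : 'I_d) F : pseries K d :=
  fun m => (m j).+1%:R * F (mnm_add m (mnm1 j)).

Definition ps_ideal_mem (k : nat) (g : 'I_k -> pseries K d) F : Prop :=
  exists c : 'I_k -> pseries K d,
    forall m, F m = \sum_(i < k) psmul (c i) (g i) m.

Definition ps_mono (n : nat) (s : 'I_n -> pseries K d) (u : 'X_{1..n}) :
  pseries K d := foldr psmul ps1 [seq psexp (s i) (u i) | i <- enum 'I_n].
Definition ps_eval (n : nat) (p : {mpoly K[n]}) (s : 'I_n -> pseries K d) :
  pseries K d := fun m => \sum_(u <- msupp p) p@_u * ps_mono s u m.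
End PSeries.
Arguments ps1 {K d}.
Arguments psC {K d} c.
Arguments psX {K d} j.


Definition gens (K : fieldType) (d : nat) (F : pseries K d)
  (G : 'I_d -> pseries K d) : 'I_d.+1 -> pseries K d :=
  fun i => match unlift ord0 i with None => F | Some j => G j end.

(* Polynomial side: K[x_1..x_n] with n = d + r; the variables x_1..x_d *)
(* are indexed by lshift r j (j : 'I_d), and x_{d+1}..x_n by          *)
(* rshift d j (j : 'I_r).                                             *)
Section Poly.
Variables (K : fieldType) (n r : nat).

Definition mideal_mem (fs : 'I_r -> {mpoly K[n]}) (g : {mpoly K[n]}) : Prop :=
  exists c : 'I_r -> {mpoly K[n]}, g = \sum_(i < r) c i * fs i.

Definition on_zero_set (fs : 'I_r -> {mpoly K[n]}) (a : 'I_n -> K) : Prop :=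
  forall i, (fs i).@[a] = 0.

Definition jacobian_at (fs : 'I_r -> {mpoly K[n]}) (a : 'I_n -> K) : 'M[K]_(r, n) :=
  \matrix_(i < r, j < n) (mderiv j (fs i)).@[a].
End Poly.

Definition hdet (K : fieldType) (d r : nat) (fs : 'I_r -> {mpoly K[d + r]}) :
  {mpoly K[d + r]} :=
  \det (\matrix_(i < r, j < r) mderiv (rshift d j) (fs i)).

From HB Require Import structures.
From mathcomp Require Import all_boot all_order all_algebra.
From mathcomp Require Import mpoly.
From mathcomp.classical Require Import boolp.
Set Implicit Arguments. Unset Strict Implicit. Unset Printing Implicit Defensive.
Import GRing.Theory.
Local Open Scope ring_scope.

(* Substituting the parametrisation [s] of W near p gives a ring morphism
   phi : K[x] -> K[[y]] that kills I_W, and phi(h) is a unit of K[[y]] because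
   its constant term is h(p) <> 0.  Hence phi(ft) = phi(f) and
   phi(d ft/d x_(d+i)) = g_i phi(f) for some series g_i.  As s_j = p_j + y_j for
   j <= d, the chain rule gives
     d phi(f)/d y_j = d phi(ft)/d y_j = phi(H_j) + (sum_i g_i d s_(d+i)/d y_j) phi(f),
   so the generators of the two ideals differ by multiples of phi(f). *)

Section PowerSeries.
Variables (K : fieldType) (d : nat).
Local Notation PS := (pseries K d).
Implicit Types (E F G H : PS) (m : 'X_{1..d}).

HB.instance Definition _ := gen_eqMixin PS.
HB.instance Definition _ := gen_choiceMixin PS.

Lemma psP F G : F =1 G <-> F = G.
Proof. by split=> [/funext|->]. Qed.

Definition ps0 : PS := fun=> 0.
Definition psopp F : PS := fun m => - F m.

Lemma psaddA : associative (@psadd K d).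
Proof. by move=> F G H; apply/psP => m; rewrite /psadd addrA. Qed.
Lemma psaddC : commutative (@psadd K d).
Proof. by move=> F G; apply/psP => m; rewrite /psadd addrC. Qed.
Lemma add0ps : left_id ps0 (@psadd K d).
Proof. by move=> F; apply/psP => m; rewrite /psadd /ps0 add0r. Qed.
Lemma addNps : left_inverse ps0 psopp (@psadd K d).
Proof. by move=> F; apply/psP => m; rewrite /psadd /ps0 /psopp addNr. Qed.
HB.instance Definition _ := GRing.isZmodule.Build PS psaddA psaddC add0ps addNps.

Definition pscoef m F : K := F m.
HB.instance Definition _ m :=
  GRing.isZmodMorphism.Build PS K (pscoef m) (fun _ _ => erefl).

Lemma ps_sumE I (r : seq I) (P : pred I) (F : I -> PS) m :
  (\sum_(i <- r | P i) F i) m = \sum_(i <- r | P i) F i m.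
Proof. exact: (raddf_sum (pscoef m)). Qed.

(* The coefficient of degree m of a product only involves coefficients of degree
   at most mdeg m, so K[[y]] inherits the ring laws from its truncations. *)
Definition pstrunc N F : {mpoly K[d]} := \sum_(m : 'X_{1..d < N}) F m *: 'X_[m].

Lemma mcoeff_pstrunc N F m :
  (pstrunc N F)@_m = if (mdeg m < N)%N then F m else 0.
Proof.
rewrite /pstrunc raddf_sum /=.
under eq_bigr => k _ do rewrite mcoeffZ mcoeffX.
case: ifP => hm.
  rewrite (bigD1 (BMultinom hm)) //= eqxx mulr1 big1 ?addr0 // => k hk.
  case: eqP => [e|]; last by rewrite mulr0.
  by case/eqP: hk; apply: val_inj; rewrite /= e.
rewrite big1 // => k _; case: eqP => [e|]; last by rewrite mulr0.
by move: (bmdeg k); rewrite e hm.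
Qed.

Lemma mcoeff_pstrunc_lt N F m : (mdeg m < N)%N -> (pstrunc N F)@_m = F m.
Proof. by move=> hm; rewrite mcoeff_pstrunc hm. Qed.

Definition eq_below N (p q : {mpoly K[d]}) :=
  forall m, (mdeg m < N)%N -> p@_m = q@_m.

Lemma eq_below_trunc N F : eq_below N (pstrunc N F) (pstrunc N.+1 F).
Proof. by move=> m hm; rewrite !mcoeff_pstrunc_lt // ltnW. Qed.

Lemma mdeg_le_split m m1 m2 : m = (m1 + m2)%MM ->
  (mdeg m1 <= mdeg m)%N /\ (mdeg m2 <= mdeg m)%N.
Proof. by move=> ->; rewrite mdegD leq_addr leq_addl. Qed.

Lemma eq_below_mul N p p' q q' :
  eq_below N p p' -> eq_below N q q' -> eq_below N (p * q) (p' * q').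
Proof.
move=> hp hq m hm; rewrite !mcoeffM; apply: eq_bigr => k /eqP/mdeg_le_split[h1 h2].
by rewrite hp ?hq //; apply: leq_ltn_trans hm.
Qed.

Lemma psmul_pstrunc N F G m :
  (mdeg m < N)%N -> psmul F G m = (pstrunc N F * pstrunc N G)@_m.
Proof.
move=> hm; rewrite mcoeffM /psmul.
transitivity (\sum_(k1 : 'X_{1..d < (mdeg m).+1})
   \sum_(k2 : 'X_{1..d < (mdeg m).+1} | m == (k1 + k2)%MM) F k1 * G k2).
  rewrite [LHS]big_mkcond /=; apply: eq_bigr => k1 _.
  case: ifP => hk.
    have hb : (mdeg (m - k1)%MM < (mdeg m).+1)%N by rewrite ltnS mdegB.
    rewrite (big_pred1 (BMultinom hb)) //= => k2; apply/eqP/eqP => [e | ->].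
      by apply: val_inj => /=; rewrite [X in (X - _)%MM]e addmC addmK.
    by rewrite /= addmC submK.
  rewrite big_pred0 // => k2; apply/negbTE/eqP => e.
  by move/negbT: hk; rewrite [X in (_ <= X)%MM]e lem_addr.
rewrite pair_big_dep /=; apply: eq_big => [//|k /eqP/mdeg_le_split [h1 h2]].
by rewrite !mcoeff_pstrunc_lt //; apply: leq_ltn_trans hm.
Qed.

Lemma psmul_pstrunc_deg F G m :
  psmul F G m = (pstrunc (mdeg m).+1 F * pstrunc (mdeg m).+1 G)@_m.
Proof. exact: psmul_pstrunc. Qed.

Lemma pstrunc_mul N F G :
  eq_below N (pstrunc N (psmul F G)) (pstrunc N F * pstrunc N G).
Proof. by move=> m hm; rewrite mcoeff_pstrunc_lt // (psmul_pstrunc _ _ hm). Qed.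

Lemma pstrunc_add N F G : pstrunc N (psadd F G) = pstrunc N F + pstrunc N G.
Proof.
by apply/mpolyP => m; rewrite mcoeffD !mcoeff_pstrunc /psadd; case: ifP; rewrite ?addr0.
Qed.

Lemma pstruncC N (a : K) : (0 < N)%N -> pstrunc N (psC a) = a%:MP.
Proof.
move=> hN; apply/mpolyP => m; rewrite mcoeffC mcoeff_pstrunc /psC.
case: ifP => h; case: eqP => [e|_]; rewrite ?mulr1 ?mulr0 //.
by move: h; rewrite e mdeg0 hN.
Qed.

Lemma pstrunc1 N : (0 < N)%N -> pstrunc N ps1 = 1.
Proof.
move=> hN; rewrite -[1](pstruncC 1 hN); congr pstrunc.
by apply/psP => m; rewrite /ps1 /psC; case: eqP.
Qed.

Lemma psmulA : associative (@psmul K d).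
Proof.
move=> F G H; apply/psP => m; rewrite !psmul_pstrunc_deg.
rewrite (eq_below_mul (pstrunc_mul F G) (fun _ _ => erefl)) //.
by rewrite (eq_below_mul (fun _ _ => erefl) (pstrunc_mul G H)) // mulrA.
Qed.

Lemma psmulC : commutative (@psmul K d).
Proof. by move=> F G; apply/psP => m; rewrite !psmul_pstrunc_deg mpoly_mulC. Qed.

Lemma mul1ps : left_id ps1 (@psmul K d).
Proof.
by move=> F; apply/psP => m; rewrite psmul_pstrunc_deg pstrunc1 // mul1r mcoeff_pstrunc_lt.
Qed.

Lemma psmulDl : left_distributive (@psmul K d) (@psadd K d).
Proof.
move=> F G H; apply/psP => m.
by rewrite {2}/psadd !psmul_pstrunc_deg pstrunc_add mulrDl mcoeffD.
Qed.

Lemma ps1_neq0 : ps1 != 0 :> PS.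
Proof.
by apply/eqP => /(congr1 (pscoef 0%MM)); rewrite /pscoef /ps1 eqxx; apply/eqP/oner_neq0.
Qed.

HB.instance Definition _ :=
  GRing.Zmodule_isComNzRing.Build PS psmulA psmulC mul1ps psmulDl ps1_neq0.

Lemma psmulE F G : F * G = psmul F G. Proof. by []. Qed.
Lemma psBE F G m : (F - G) m = F m - G m. Proof. by []. Qed.
Lemma ps1E m : (1 : PS) m = (m == 0%MM)%:R. Proof. by []. Qed.

Lemma psmulCl (a : K) F m : (psmul (psC a) F) m = a * F m.
Proof. by rewrite psmul_pstrunc_deg pstruncC // mcoeffCM mcoeff_pstrunc_lt. Qed.

Lemma psC_is_zmod_morphism : zmod_morphism (@psC K d).
Proof. by move=> a b; apply/psP => m; rewrite psBE /psC; case: ifP; rewrite ?subr0. Qed.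

Lemma psC_is_monoid_morphism : monoid_morphism (@psC K d).
Proof.
split; first by apply/psP => m; rewrite ps1E /psC; case: eqP.
move=> a b; apply/psP => m.
by rewrite psmulE psmulCl /psC; case: ifP; rewrite ?mulr0.
Qed.

HB.instance Definition _ := GRing.isZmodMorphism.Build K PS (@psC K d)
  psC_is_zmod_morphism.
HB.instance Definition _ := GRing.isMonoidMorphism.Build K PS (@psC K d)
  psC_is_monoid_morphism.

Lemma pscoef0_is_monoid_morphism : monoid_morphism (pscoef 0%MM).
Proof.
split=> [|F G]; first by rewrite /pscoef ps1E eqxx.
have h0 : (mdeg (0%MM : 'X_{1..d}) < 1)%N by rewrite mdeg0.
by rewrite /pscoef psmulE (psmul_pstrunc _ _ h0) rmorphM /= !mcoeff_pstrunc_lt.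
Qed.

HB.instance Definition _ := GRing.isMonoidMorphism.Build PS K (pscoef 0%MM)
  pscoef0_is_monoid_morphism.

Lemma ps_evalE n (p : {mpoly K[n]}) (s : 'I_n -> PS) :
  ps_eval p s = mmap (@psC K d) s p.
Proof.
have psexpE F k : psexp F k = F ^+ k by elim: k => //= k ->; rewrite exprS.
apply/psP => m; rewrite /ps_eval /mmap ps_sumE; apply: eq_bigr => u _.
rewrite psmulE psmulCl /ps_mono /mmap1 -big_enum /=; congr (_ * _ m).
by elim: (enum _) => [|i l IH]; rewrite ?big_nil // big_cons /= IH psexpE.
Qed.

Lemma mmap_coef0 n (s : 'I_n -> PS) p :
  mmap (@psC K d) s p 0%MM = p.@[fun i => s i 0%MM].
Proof.
rewrite -[LHS]/(pscoef 0%MM _) rmorph_sum mevalE; apply: eq_bigr => u _.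
rewrite rmorphM rmorph_prod /= {1}/pscoef /psC eqxx; congr (_ * _).
by apply: eq_bigr => i _; rewrite rmorphXn.
Qed.

Lemma psderiv_is_zmod_morphism (j : 'I_d) : zmod_morphism (psderiv j : PS -> PS).
Proof. by move=> F G; apply/psP => m; rewrite psBE /psderiv psBE mulrBr. Qed.

HB.instance Definition _ j := GRing.isZmodMorphism.Build PS PS (psderiv j)
  (psderiv_is_zmod_morphism j).

Lemma mdegDU m (j : 'I_d) : mdeg (m + U_(j))%MM = (mdeg m).+1.
Proof. by rewrite mdegD mdeg1 addn1. Qed.

Lemma psderiv_pstrunc N j F m :
  (mdeg m < N)%N -> psderiv j F m = (mderiv j (pstrunc N.+1 F))@_m.
Proof.
by move=> hm; rewrite mcoeff_deriv mcoeff_pstrunc_lt ?mdegDU // /psderiv mulr_natl.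
Qed.

Lemma eq_below_mderiv N j p q :
  eq_below N.+1 p q -> eq_below N (mderiv j p) (mderiv j q).
Proof. by move=> h m hm; rewrite !mcoeff_deriv h // mdegDU. Qed.

Lemma psderivM j F G : psderiv j (F * G) = psderiv j F * G + F * psderiv j G.
Proof.
apply/psP => m; set N := (mdeg m).+1; have hm : (mdeg m < N)%N by [].
have trD H : eq_below N (pstrunc N (psderiv j H)) (mderiv j (pstrunc N.+1 H)).
  by move=> k hk; rewrite mcoeff_pstrunc_lt // (psderiv_pstrunc _ _ hk).
rewrite (psderiv_pstrunc _ _ hm) (eq_below_mderiv j (pstrunc_mul F G)) //.
rewrite mderivM mcoeffD [in RHS]/+%R /= /psadd !psmulE !psmul_pstrunc_deg.
rewrite (eq_below_mul (trD F) (eq_below_trunc G)) //.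
by rewrite (eq_below_mul (eq_below_trunc F) (trD G)).
Qed.

Lemma psderivC j (a : K) : psderiv j (psC a) = 0.
Proof.
apply/psP => m; rewrite /psderiv /psC.
by case: eqP => [/(congr1 mdeg)|]; rewrite ?mulr0 // mdegDU mdeg0.
Qed.

Lemma psderiv_coord j j' (a : K) : psderiv j (psadd (psC a) (psX j')) = (j == j')%:R.
Proof.
have mdeg_neq0 m : (m + U_(j))%MM != 0%MM.
  by apply/eqP => /(congr1 mdeg); rewrite mdegDU mdeg0.
apply/psP => m; rewrite /psderiv /psadd /psC /psX (negbTE (mdeg_neq0 m)) add0r.
have -> : ((j == j')%:R : PS) m = (j == j')%:R * (m == 0%MM)%:R.
  by case: (j == j'); rewrite ?mul0r ?mul1r.
case: (eqVneq m 0%MM) => [->|nz]; first by rewrite add0m eq_mnm1 mnm0E mulr1 mul1r.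
rewrite !mulr0; case: eqP => [/(congr1 mdeg)|]; rewrite ?mulr0 //.
by rewrite mdegDU mdeg1 => -[/eqP]; rewrite mdeg_eq0 (negbTE nz).
Qed.

Lemma psexp_coef_below E : E 0%MM = 0 ->
  forall k m, (mdeg m < k)%N -> (E ^+ k) m = 0.
Proof.
move=> E0; elim=> [|k IH] m hm //.
rewrite exprS psmulE /psmul big1 // => m1 hm1; move: (bmnm m1) hm1 => {}m1 hm1.
have [->|nz] := eqVneq m1 0%MM; first by rewrite E0 mul0r.
rewrite IH ?mulr0 //; rewrite -(submK hm1) mdegD ltnS in hm; apply: leq_trans hm.
by rewrite -addn1 leq_add2l lt0n mdeg_eq0.
Qed.

Lemma psmul_coef_local N F G G' m : (forall k, (mdeg k < N)%N -> G k = G' k) ->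
  (mdeg m < N)%N -> (F * G) m = (F * G') m.
Proof.
move=> h hm; rewrite !psmulE !(psmul_pstrunc _ _ hm); congr (_ * _)@_m.
by apply/mpolyP => k; rewrite !mcoeff_pstrunc; case: ifP => // /h ->.
Qed.

(* The inverse of [c (1 - E)] with [E 0 = 0] is [c^-1 (1 + E + E^2 + ...)]; its
   coefficient of degree [k] only involves the first [k + 1] terms of the sum. *)
Lemma ps_invertible F : F 0%MM != 0 -> exists G : PS, G * F = 1.
Proof.
move=> F0; set c := F 0%MM; pose E : PS := 1 - psC c^-1 * F.
have E0 : E 0%MM = 0 by rewrite /E psBE ps1E psmulE psmulCl mulVf // eqxx subrr.
pose S : PS := fun m => \sum_(k < (mdeg m).+1) (E ^+ k) m.
exists (psC c^-1 * S); apply/psP => m; rewrite mulrC.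
set N := (mdeg m).+1; have hm : (mdeg m < N)%N by [].
rewrite (@psmul_coef_local N _ _ (psC c^-1 * \sum_(k < N) E ^+ k)) //; last first.
  move=> k hk; rewrite !psmulE !psmulCl ps_sumE; congr (_ * _).
  rewrite /S (big_ord_widen _ (fun i => (E ^+ i) k) hk) big_mkcond /=.
  apply: eq_bigr => i _; case: ifP => // /negbT; rewrite -leqNgt => hi.
  by rewrite psexp_coef_below.
have -> : F * (psC c^-1 * \sum_(k < N) E ^+ k) = 1 - E ^+ N.
  rewrite mulrA [F * _]mulrC (_ : psC c^-1 * F = 1 - E); last first.
    by rewrite opprB addrCA subrr addr0.
  by rewrite -[1 - E]opprB mulNr -subrX1 opprB.
by rewrite psBE psexp_coef_below // subr0.
Qed.

End PowerSeries.

Section ChainRule.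
Variables (K : fieldType) (R : comNzRingType) (c : {rmorphism K -> R}).
Variable D : {additive R -> R}.
Hypothesis DM : forall x y, D (x * y) = D x * y + x * D y.
Hypothesis Dc : forall a, D (c a) = 0.
Variables (n : nat) (s : 'I_n -> R).
Local Notation phi := (mmap c s).

Lemma mmap_deriv p : D (phi p) = \sum_(i < n) phi (mderiv i p) * D (s i).
Proof.
pose chain p := D (phi p) = \sum_(i < n) phi (mderiv i p) * D (s i).
have chainD p1 p2 : chain p1 -> chain p2 -> chain (p1 + p2).
  rewrite /chain => h1 h2; rewrite !raddfD /= h1 h2 -big_split /=.
  by apply: eq_bigr => i _; rewrite mderivD raddfD mulrDl.
have chainM p1 p2 : chain p1 -> chain p2 -> chain (p1 * p2).
  rewrite /chain => h1 h2.
  rewrite rmorphM DM h1 h2 mulr_suml mulr_sumr -big_split /=.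
  apply: eq_bigr => i _; rewrite mderivM raddfD /= !rmorphM mulrDl.
  by congr (_ + _); rewrite -!mulrA; congr (_ * _); rewrite mulrC.
have chainC a : chain a%:MP.
  by rewrite /chain mmapC Dc big1 // => i _; rewrite mderivC raddf0 mul0r.
have chainX k : chain 'X_k.
  rewrite /chain mmapX mmap1U (bigD1 k) //= big1 ?addr0 => [|i /negbTE ik].
    rewrite mderivX mnm1E eqxx -[X in (X - _)%MM]add0m addmK mpolyX0 scale1r.
    by rewrite rmorph1 mul1r.
  by rewrite mderivX mnm1E eq_sym ik scale0r raddf0 mul0r.
have chain1 : chain 1 by rewrite -(rmorph1 (@mpolyC n K)); apply: chainC.
rewrite [p]mpolyE; apply: (big_ind _ (chainC 0) chainD) => m _.
rewrite -mul_mpolyC mpolyXE_id; apply: (chainM) => //.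
apply: (big_ind _ chain1 chainM) => i _.
by elim: (m i) => [|e IH]; rewrite ?exprS; auto.
Qed.

End ChainRule.

Lemma rmorph_mideal_eq0 (K : fieldType) (R : nzRingType) n r
    (phi : {rmorphism {mpoly K[n]} -> R}) (fs : 'I_r -> {mpoly K[n]}) g :
  (forall i, phi (fs i) = 0) -> mideal_mem fs g -> phi g = 0.
Proof.
by move=> phi_fs [c ->]; rewrite rmorph_sum big1 // => i _; rewrite rmorphM phi_fs mulr0.
Qed.

Lemma expr_linvK (R : comNzRingType) (u v x y : R) k :
  v * u = 1 -> u ^+ k * x = y -> x = v ^+ k * y.
Proof. by move=> vu <-; rewrite mulrA -exprMn vu expr1n mul1r. Qed.

Section IdealGenerators.
Variables (R : comNzRingType) (k : nat).
Implicit Types (A X : R) (G : 'I_k -> R).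

Definition ideal_gens_mem A G X :=
  exists c0 (c : 'I_k -> R), X = c0 * A + \sum_j c j * G j.

Lemma ideal_gens_mem_shift A G1 G2 (e : 'I_k -> R) :
  (forall j, G2 j = G1 j + e j * A) ->
  forall X, ideal_gens_mem A G1 X <-> ideal_gens_mem A G2 X.
Proof.
move=> G12.
have sumG2 (c : 'I_k -> R) :
    \sum_j c j * G2 j = \sum_j c j * G1 j + (\sum_j c j * e j) * A.
  by rewrite mulr_suml -big_split; apply: eq_bigr => j _; rewrite G12 mulrDr mulrA.
move=> X; split => -[c0 [c ->]].
  by exists (c0 - \sum_j c j * e j), c; rewrite sumG2 mulrBl addrA addrAC subrK.
by exists (c0 + \sum_j c j * e j), c; rewrite sumG2 mulrDl addrA addrAC.
Qed.

End IdealGenerators.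

Lemma ps_ideal_mem_gens (K : fieldType) d (A : pseries K d) G X :
  ps_ideal_mem (gens A G) X <-> ideal_gens_mem A G X.
Proof.
have sum_gens (c : 'I_d.+1 -> pseries K d) :
    \sum_(i < d.+1) c i * gens A G i = c ord0 * A + \sum_j c (lift ord0 j) * G j.
  rewrite big_ord_recl /gens unlift_none; congr (_ + _).
  by apply: eq_bigr => j _; rewrite liftK.
split=> [[c hc]|[c0 [c ->]]].
  exists (c ord0), (fun j => c (lift ord0 j)); rewrite -sum_gens.
  by apply/psP => m; rewrite hc ps_sumE.
exists (gens c0 c) => m.
rewrite -(ps_sumE _ _ (fun i => gens c0 c i * gens A G i)) sum_gens /gens unlift_none.
by congr (_ + (_ : pseries K d) m); apply: eq_bigr => j _; rewrite liftK.
Qed.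

Lemma psderiv_mmap_graph (K : fieldType) d r (a : 'I_(d + r) -> K)
    (s : 'I_(d + r) -> pseries K d) :
  (forall j, s (lshift r j) = psadd (psC (a (lshift r j))) (psX j)) ->
  forall j p, psderiv j (mmap psC s p) =
    mmap psC s (mderiv (lshift r j) p) +
    \sum_(i < r) mmap psC s (mderiv (rshift d i) p) * psderiv j (s (rshift d i)).
Proof.
move=> s_coord j p.
rewrite (mmap_deriv (psderivM j) (psderivC j)) big_split_ord /=; congr (_ + _).
rewrite (bigD1 j) //= s_coord psderiv_coord eqxx mulr1 big1 ?addr0 // => j' /negbTE jj'.
by rewrite s_coord psderiv_coord eq_sym jj' mulr0.
Qed.

Theorem lemma3p16 (K : closedFieldType) (d r : nat)
  (fs : 'I_r -> {mpoly K[d + r]}) (f ft : {mpoly K[d + r]}) :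
  (* I_W = <f_1,...,f_r> is the vanishing ideal of W = V(f_1,...,f_r) *)
  (forall g : {mpoly K[d + r]},
      (forall a : 'I_(d + r) -> K, on_zero_set fs a -> g.@[a] = 0) ->
      mideal_mem fs g) ->
  (* W is smooth of codimension r: the Jacobian has rank r on W *)
  (forall a : 'I_(d + r) -> K, on_zero_set fs a -> \rank (jacobian_at fs a) = r) ->
  (* f has nonzero image in K[W] *)
  ~ mideal_mem fs f ->
  (* ft and f have the same image in O_W(W cap D(h)) *)
  (exists k : nat, mideal_mem fs (hdet fs ^+ k * (ft - f))) ->
  (* d ft / d x_{d+i} maps to 0 in O_W(W cap D(h)) / <f>, i = 1..r *)
  (forall i : 'I_r,
     exists (k : nat) (g : {mpoly K[d + r]}),
       mideal_mem fs (hdet fs ^+ k * mderiv (rshift d i) ft - g * f)) ->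
  (* every point p = a of W cap D(h) *)
  forall a : 'I_(d + r) -> K, on_zero_set fs a -> (hdet fs).@[a] != 0 ->
  (* s i = Phi^{-1}(image of x_i in the completion of O_{W,p}) in K[[y_1..y_d]] *)
  forall s : 'I_(d + r) -> pseries K d,
    (forall j : 'I_d, s (lshift r j) = psadd (psC (a (lshift r j))) (psX j)) ->
    (forall i : 'I_(d + r), s i 0%MM = a i) ->
    (forall i : 'I_r, forall m, ps_eval (fs i) s m = 0) ->
  (* Phi^{-1}(Delta(f) \hat O_{W,p}) = Phi^{-1}(Delta_p(f)) *)
  forall F : pseries K d,
    ps_ideal_mem
      (gens (ps_eval f s) (fun j => ps_eval (mderiv (lshift r j) ft) s)) F
    <->
    ps_ideal_mem
      (gens (ps_eval f s) (fun j => psderiv j (ps_eval f s))) F.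
Proof.
move=> _ _ _ [k ft_f] dft_normal a _ h_a s s_coord s_at_a s_on_W F.
pose phi : {rmorphism {mpoly K[d + r]} -> pseries K d} := mmap (@psC K d) s.
have phi_I g : mideal_mem fs g -> phi g = 0.
  by apply: rmorph_mideal_eq0 => i; apply/psP => m; rewrite /= -ps_evalE s_on_W.
have [v v_h] : exists v, v * phi (hdet fs) = 1.
  by apply: ps_invertible; rewrite /phi /= mmap_coef0 (meval_eq _ s_at_a).
have phi_ft : phi ft = phi f.
  move: (phi_I _ ft_f); rewrite rmorphM rmorphXn => /(expr_linvK v_h).
  by rewrite mulr0 rmorphB => /eqP; rewrite subr_eq0 => /eqP.
have [g phi_dft] : exists g : 'I_r -> pseries K d,
    forall i, phi (mderiv (rshift d i) ft) = g i * phi f.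
  suff /fin_all_exists : forall i, exists g, phi (mderiv (rshift d i) ft) = g * phi f.
    by [].
  move=> i; have [k' [g' /phi_I]] := dft_normal i.
  rewrite rmorphB !rmorphM rmorphXn => /eqP; rewrite subr_eq0.
  move=> /eqP /(expr_linvK v_h) ->.
  by exists (v ^+ k' * phi g'); rewrite mulrA.
rewrite !ps_ideal_mem_gens.
pose e j := \sum_i g i * psderiv j (s (rshift d i)).
apply: (ideal_gens_mem_shift (e := e)) => j.
rewrite !ps_evalE -/phi -phi_ft (psderiv_mmap_graph s_coord) mulr_suml phi_ft.
by congr (_ + _); apply: eq_bigr => i _; rewrite phi_dft mulrAC.
Qed.
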